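(* Let $\mathcal P$ be a dioperad and let $(V,\rho)$ be a finite-dimensional representation of $\mathcal P$, i.e. a morphism of dioperads $\rho:\mathcal P\to \mathit{End}_V$. Then $\rho$ induces a representation $\bar\rho$ of the 2-colored operad $\Psi(\mathcal P)$ on the pair $(V,V^* )$, where $V$ is assigned to the straight color and $V^*$ to the dotted color; for $\gamma\in\mathcal P(m,n)$ the operations $\bar\rho(\Psi^{|}(\gamma))\in\mathrm{Hom}(V^{\otimes m}\otimes (V^* )^{\otimes n-1},V)$ and $\bar\rho(\Psi^{\mathrm{dot}}(\gamma))\in \mathrm{Hom}(V^{\otimes m-1}\otimes (V^* )^{\otimes n},V^* )$ correspond to $\rho(\gamma)\in\mathrm{Hom}(V^{\otimes m},V^{\otimes n})$ under the canonical isomorphisms $\mathrm{Hom}(V^{\otimes m},V^{\otimes n})\cong \mathrm{Hom}(V^{\otimes m}\otimes (V^* )^{\otimes n-1},V)\cong \mathrm{Hom}(V^{\otimes m-1}\otimes (V^* )^{\otimes n},V^* )$.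
   Context: A dioperad $\mathcal P$ consists of spaces $\mathcal P(m,n)$ ($m$ inputs, $n$ outputs) with right $S_m$- and left $S_n$-actions and associative, equivariant infinitesimal compositions ${}_i\circ_j:\mathcal P(m,n)\otimes\mathcal P(m',n')\to\mathcal P(m+m'-1,n+n'-1)$ plugging the $i$-th output of the first into the $j$-th input of the second (iterated compositions are along directed trees). The endomorphism dioperad is $\mathit{End}_V(m,n)=\mathrm{Hom}(V^{\otimes m},V^{\otimes n})$ with the natural compositions. $\Psi(\mathcal P)$ is the 2-colored operad (colors ''straight'' and ''dotted'') obtained by rerooting: choosing an input or output leg of a dioperadic tree as root, reorienting all edges towards it, and coloring an edge straight if the new orientation agrees with the original one and dotted otherwise. Thus $\Psi(\mathcal P)^{|}(m,n-1)=\mathcal P(m,n)$ (straight output, $m$ straight and $n-1$ dotted inputs; for $\gamma\in\mathcal P(m,n)$ the corresponding element is denoted $\Psi^{|}(\gamma)$) and $\Psi(\mathcal P)^{\mathrm{dot}}(m-1,n)=\mathcal P(m,n)$ (dotted output, $m-1$ straight and $n$ dotted inputs; element denoted $\Psi^{\mathrm{dot}}(\gamma)$), with compositions induced by those of $\mathcal P$. *)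

From mathcomp Require Import all_boot all_order all_algebra all_fingroup.
Set Implicit Arguments. Unset Strict Implicit. Unset Printing Implicit Defensive.
Import GRing.Theory.
Local Open Scope ring_scope.

(* dP m n  = P(m,n): m inputs, n outputs (a vector space over F).            *)
(* dcomp i j f g  (f in P(m,n+1), g in P(m'+1,n')) plugs output i of f into  *)
(* input j of g.  Convention for the order of the legs of the result         *)
(* (in P(m+m', n+n')):                                                       *)
(*   inputs  = inputs of g before j, all inputs of f, inputs of g after j;   *)
(*   outputs = outputs of f before i, all outputs of g, outputs of f after i.*)
(* dact_in : right S_m action on inputs, dact_out : left S_n action on       *)
(* outputs.                                                                  *)
Record dioperad (F : fieldType) := Dioperad {
  dP : nat -> nat -> lmodType F;
  dcomp : forall m n m' n', 'I_n.+1 -> 'I_m'.+1 ->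
            dP m n.+1 -> dP m'.+1 n' -> dP (m + m') (n + n');
  dact_in : forall m n, dP m n -> 'S_m -> dP m n;
  dact_out : forall m n, 'S_n -> dP m n -> dP m n
}.

(* Endomorphism dioperad of V = F^d, in coordinates.  A linear map           *)
(* V^(x)m -> V^(x)n is given by its matrix coefficients T a b, where a (resp.*)
(* b) is a list of m (resp. n) basis indices: T(e_a) = sum_b T a b e_b.      *)
(* Only lists of the right lengths are meaningful.                           *)
Definition tensor (F : fieldType) (d : nat) := seq 'I_d -> seq 'I_d -> F.

Definition permute (T : Type) (n : nat) (s : 'S_n) (a : seq T) : seq T :=
  if a is x0 :: _ then [seq nth x0 a (s i) | i <- enum 'I_n] else [::].

(* composition in End_V (contraction of output i of T with input j of U),  *)
(* T : V^(x)m -> V^(x)(n+1),  U : V^(x)(m'+1) -> V^(x)n'.                     *)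
Definition end_comp (F : fieldType) (d : nat) (m n' i j : nat)
  (T U : tensor F d) : tensor F d :=
  fun a b =>
    \sum_(l < d) T (take m (drop j a)) (take i b ++ l :: drop (i + n') b) *
                 U (take j a ++ l :: drop (j + m) a) (take n' (drop i b)).

(* right action on inputs, left action on outputs, in End_V *)
Definition end_act_in (F : fieldType) (d m : nat) (T : tensor F d) (s : 'S_m)
  : tensor F d := fun a b => T (permute s a) b.
Definition end_act_out (F : fieldType) (d n : nat) (s : 'S_n) (T : tensor F d)
  : tensor F d := fun a b => T a (permute s^-1 b).

Definition is_dioperad_rep (F : fieldType) (d : nat) (P : dioperad F)
  (rho : forall m n, dP P m n -> tensor F d) : Prop :=
  [/\ (forall m n (x y : dP P m n) (r : F) a b,
         rho m n (r *: x + y) a b = r * rho m n x a b + rho m n y a b),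
      (forall m n m' n' (i : 'I_n.+1) (j : 'I_m'.+1)
              (f : dP P m n.+1) (g : dP P m'.+1 n') a b,
         size a = (m + m')%N -> size b = (n + n')%N ->
         rho _ _ (dcomp i j f g) a b
           = end_comp m n' i j (rho _ _ f) (rho _ _ g) a b),
      (forall m n (x : dP P m n) (s : 'S_m) a b,
         size a = m -> size b = n ->
         rho _ _ (dact_in x s) a b = end_act_in (rho _ _ x) s a b) &
      (forall m n (x : dP P m n) (s : 'S_n) a b,
         size a = m -> size b = n ->
         rho _ _ (dact_out s x) a b = end_act_out s (rho _ _ x) a b)].

(* 2-colored operads (colors: true = straight, false = dotted), presented   *)
(* with the inputs of an operation grouped by color: O a b c has a straight *)
(* inputs, b dotted inputs and output of color c.                           *)
(* comp_s k x y : plug y (straight output) into straight input k of x;      *)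
(*   straight inputs: x's before k, y's, x's after k; dotted: x's, then y's.*)
(* comp_d k x y : plug y (dotted output) into dotted input k of x;          *)
(*   straight inputs: x's, then y's; dotted: x's before k, y's, x's after k.*)
(* act_s, act_d : right actions of S_a, S_b on straight / dotted inputs.    *)
Record col2operad (F : fieldType) := Col2operad {
  cO : nat -> nat -> bool -> lmodType F;
  comp_s : forall a b c a' b', 'I_a.+1 ->
             cO a.+1 b c -> cO a' b' true -> cO (a + a') (b + b') c;
  comp_d : forall a b c a' b', 'I_b.+1 ->
             cO a b.+1 c -> cO a' b' false -> cO (a + a') (b + b') c;
  act_s : forall a b c, cO a b c -> 'S_a -> cO a b c;
  act_d : forall a b c, cO a b c -> 'S_b -> cO a b c
}.

(* Colored endomorphism operad of (V, V^* ), V = F^d, in coordinates: a map *)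
(* V^(x)a (x) (V^* )^(x)b -> V (or V^* ) is given by its coefficients X s t o*)
(* (standard basis of V, dual basis of V^* ).                               *)
Definition ctensor (F : fieldType) (d : nat) := seq 'I_d -> seq 'I_d -> 'I_d -> F.

Definition cend_comp_s (F : fieldType) (d : nat) (b a' k : nat)
  (X Y : ctensor F d) : ctensor F d :=
  fun s t o => \sum_(l < d)
    X (take k s ++ l :: drop (k + a') s) (take b t) o *
    Y (take a' (drop k s)) (drop b t) l.

Definition cend_comp_d (F : fieldType) (d : nat) (a b' k : nat)
  (X Y : ctensor F d) : ctensor F d :=
  fun s t o => \sum_(l < d)
    X (take a s) (take k t ++ l :: drop (k + b') t) o *
    Y (drop a s) (take b' (drop k t)) l.

Definition cend_act_s (F : fieldType) (d a : nat) (X : ctensor F d) (s : 'S_a)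
  : ctensor F d := fun u t o => X (permute s u) t o.
Definition cend_act_d (F : fieldType) (d b : nat) (X : ctensor F d) (s : 'S_b)
  : ctensor F d := fun u t o => X u (permute s t) o.

Definition is_col2_rep (F : fieldType) (d : nat) (Q : col2operad F)
  (rb : forall a b c, cO Q a b c -> ctensor F d) : Prop :=
  [/\ (forall a b c (x y : cO Q a b c) (r : F) s t o,
         rb _ _ _ (r *: x + y) s t o = r * rb _ _ _ x s t o + rb _ _ _ y s t o),
      (forall a b c a' b' (k : 'I_a.+1) (x : cO Q a.+1 b c)
              (y : cO Q a' b' true) s t o,
         size s = (a + a')%N -> size t = (b + b')%N ->
         rb _ _ _ (comp_s k x y) s t o
           = cend_comp_s b a' k (rb _ _ _ x) (rb _ _ _ y) s t o),
      (forall a b c a' b' (k : 'I_b.+1) (x : cO Q a b.+1 c)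
              (y : cO Q a' b' false) s t o,
         size s = (a + a')%N -> size t = (b + b')%N ->
         rb _ _ _ (comp_d k x y) s t o
           = cend_comp_d a b' k (rb _ _ _ x) (rb _ _ _ y) s t o),
      (forall a b c (x : cO Q a b c) (sg : 'S_a) s t o,
         size s = a -> size t = b ->
         rb _ _ _ (act_s x sg) s t o = cend_act_s (rb _ _ _ x) sg s t o) &
      (forall a b c (x : cO Q a b c) (sg : 'S_b) s t o,
         size s = a -> size t = b ->
         rb _ _ _ (act_d x sg) s t o = cend_act_d (rb _ _ _ x) sg s t o)].

(* Psi^|(m, n-1) = P(m, n): root = output 0, dotted inputs = outputs 1..n-1. *)
(* Psi^dot(m-1, n) = P(m, n): root = input 0, straight inputs = inputs       *)
(* 1..m-1, dotted inputs = outputs 0..n-1.                                   *)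
Section Psi.
Variables (F : fieldType) (P : dioperad F).

Definition castP m n m' n' (e1 : m = m') (e2 : n = n') (x : dP P m n)
  : dP P m' n' :=
  match e1 in _ = m1 return dP P m1 n' with
  | erefl => match e2 in _ = n1 return dP P m n1 with erefl => x end
  end.

Definition psiO (a b : nat) (c : bool) : lmodType F :=
  if c then dP P a b.+1 else dP P a.+1 b.

Lemma psi_e1 a b : (b + a.+1 = (a + b).+1)%N.
Proof. by rewrite addnS addnC. Qed.
Lemma psi_e2 a b : (a.+1 + b = (a + b).+1)%N.
Proof. by rewrite addSn. Qed.

Definition psi_comp_s a b (c : bool) a' b' (k : 'I_a.+1) :
  psiO a.+1 b c -> psiO a' b' true -> psiO (a + a') (b + b') c :=
  match c return psiO a.+1 b c -> psiO a' b' true -> psiO (a + a') (b + b') c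
  with
  | true => fun x y =>
      castP (addnC a' a) (psi_e1 b b') (dcomp ord0 k y x)
  | false => fun x y =>
      castP (psi_e1 a a') (addnC b' b) (dcomp ord0 (lift ord0 k) y x)
  end.

Definition psi_comp_d a b (c : bool) a' b' (k : 'I_b.+1) :
  psiO a b.+1 c -> psiO a' b' false -> psiO (a + a') (b + b') c :=
  match c return psiO a b.+1 c -> psiO a' b' false -> psiO (a + a') (b + b') c
  with
  | true => fun x y =>
      castP (erefl _) (psi_e2 b b') (dcomp (lift ord0 k) ord0 x y)
  | false => fun x y =>
      castP (psi_e2 a a') (erefl _) (dcomp k ord0 x y)
  end.

Definition psi_act_s a b (c : bool) : psiO a b c -> 'S_a -> psiO a b c :=
  match c return psiO a b c -> 'S_a -> psiO a b c with
  | true => fun x s => dact_in x s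
  | false => fun x s => dact_in x (lift_perm ord0 ord0 s)
  end.

Definition psi_act_d a b (c : bool) : psiO a b c -> 'S_b -> psiO a b c :=
  match c return psiO a b c -> 'S_b -> psiO a b c with
  | true => fun x s => dact_out (lift_perm ord0 ord0 s)^-1 x
  | false => fun x s => dact_out s^-1 x
  end.

Definition Psi : col2operad F :=
  Col2operad psi_comp_s psi_comp_d psi_act_s psi_act_d.

End Psi.

(* The canonical isomorphisms                                                *)
(*   Hom(V^m, V^n) ~ Hom(V^m (x) (V^* )^(n-1), V)   (contract outputs 1..n-1)  *)
(*   Hom(V^m, V^n) ~ Hom(V^(m-1) (x) (V^* )^n, V^* ) (transpose input 0)       *)
(* in coordinates (standard basis of V, dual basis of V^* ).                  *)
Definition can_iso_s (F : fieldType) (d : nat) (T : tensor F d) : ctensor F d :=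
  fun s t o => T s (o :: t).
Definition can_iso_d (F : fieldType) (d : nat) (T : tensor F d) : ctensor F d :=
  fun s t o => T (o :: s) t.

From mathcomp Require Import all_boot all_order all_algebra all_fingroup.
Set Implicit Arguments. Unset Strict Implicit. Unset Printing Implicit Defensive.
Import GRing.Theory.
Local Open Scope ring_scope.

(* The representation of Psi(P) is rho itself, read through the canonical
   isomorphisms: a straight-rooted operation is rho g with its root output
   turned into the output V, a dotted-rooted one is rho g with its root input
   dualized.  Every composition of Psi(P) is a dioperadic composition along
   the root leg of one factor, and under these isomorphisms the contraction
   of End_V along that leg is literally the colored contraction; the
   actions match because lifting a permutation to fix the root leg commutes
   with consing the root index. *)

Lemma permute_lift (T : Type) n (s : 'S_n) (o : T) u : size u = n ->
  permute (lift_perm ord0 ord0 s) (o :: u) = o :: permute s u.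
Proof.
move=> size_u; rewrite /permute enum_ordSl /= lift_perm_id /=; congr cons.
case: u size_u => [|x u] size_u.
  subst n; rewrite (_ : enum 'I_0 = [::]) //.
  by apply: size0nil; rewrite size_enum_ord.
rewrite -map_comp; apply: eq_map => i /=.
by rewrite lift_perm_lift /=; apply: set_nth_default; rewrite size_u ltn_ord.
Qed.

Section CanIsoMorphism.
Variables (F : fieldType) (d : nat).
Implicit Types (T U : tensor F d) (s t : seq 'I_d) (o : 'I_d).

Lemma cend_comp_s_can_iso_s (b a' k : nat) T U s t o :
  cend_comp_s b a' k (can_iso_s T) (can_iso_s U) s t o
  = can_iso_s (end_comp a' b.+1 0 k U T) s t o.
Proof. by apply: eq_bigr => l _; rewrite mulrC. Qed.

Lemma cend_comp_s_can_iso_d (b a' k : nat) T U s t o :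
  cend_comp_s b a' k (can_iso_d T) (can_iso_s U) s t o
  = can_iso_d (end_comp a' b 0 k.+1 U T) s t o.
Proof. by apply: eq_bigr => l _ /=; rewrite take0 drop0 add0n mulrC. Qed.

Lemma cend_comp_d_can_iso_s (a b' k : nat) T U s t o :
  cend_comp_d a b' k (can_iso_s T) (can_iso_d U) s t o
  = can_iso_s (end_comp a b' k.+1 0 T U) s t o.
Proof. by apply: eq_bigr => l _ /=; rewrite take0 drop0 add0n. Qed.

Lemma cend_comp_d_can_iso_d (a b' k : nat) T U s t o :
  cend_comp_d a b' k (can_iso_d T) (can_iso_d U) s t o
  = can_iso_d (end_comp a.+1 b' k 0 T U) s t o.
Proof. by apply: eq_bigr. Qed.

Lemma cend_act_s_can_iso_s (a : nat) T (sg : 'S_a) s t o :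
  cend_act_s (can_iso_s T) sg s t o = can_iso_s (end_act_in T sg) s t o.
Proof. by []. Qed.

Lemma cend_act_s_can_iso_d (a : nat) T (sg : 'S_a) s t o : size s = a ->
  cend_act_s (can_iso_d T) sg s t o
  = can_iso_d (end_act_in T (lift_perm ord0 ord0 sg)) s t o.
Proof. by move=> size_s; rewrite /cend_act_s /can_iso_d /end_act_in permute_lift. Qed.

Lemma cend_act_d_can_iso_s (b : nat) T (sg : 'S_b) s t o : size t = b ->
  cend_act_d (can_iso_s T) sg s t o
  = can_iso_s (end_act_out (lift_perm ord0 ord0 sg)^-1 T) s t o.
Proof.
by move=> size_t; rewrite /cend_act_d /can_iso_s /end_act_out invgK permute_lift.
Qed.

Lemma cend_act_d_can_iso_d (b : nat) T (sg : 'S_b) s t o :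
  cend_act_d (can_iso_d T) sg s t o = can_iso_d (end_act_out sg^-1 T) s t o.
Proof. by rewrite /cend_act_d /can_iso_d /end_act_out invgK. Qed.

End CanIsoMorphism.

Section PsiRepresentation.
Variables (F : fieldType) (d : nat) (P : dioperad F)
  (rho : forall m n, dP P m n -> tensor F d).
Hypothesis rho_rep : is_dioperad_rep rho.

Definition psi_rep a b (c : bool) : cO (Psi P) a b c -> ctensor F d :=
  match c return cO (Psi P) a b c -> ctensor F d with
  | true => fun x => can_iso_s (rho x)
  | false => fun x => can_iso_d (rho x)
  end.

Lemma rho_castP m n m' n' (e1 : m = m') (e2 : n = n') z :
  rho (castP e1 e2 z) = rho z.
Proof. by subst m' n'. Qed.

Lemma psi_rep_is_linear a b c (x y : cO (Psi P) a b c) r s t o :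
  psi_rep (r *: x + y) s t o = r * psi_rep x s t o + psi_rep y s t o.
Proof. by case: rho_rep => rho_lin _ _ _; case: c x y => x y; apply: rho_lin. Qed.

Lemma psi_rep_comp_s a b c a' b' (k : 'I_a.+1) (x : cO (Psi P) a.+1 b c)
    (y : cO (Psi P) a' b' true) s t o :
  size s = (a + a')%N -> size t = (b + b')%N ->
  psi_rep (comp_s k x y) s t o
  = cend_comp_s b a' k (psi_rep x) (psi_rep y) s t o.
Proof.
case: rho_rep => _ rho_comp _ _ size_s size_t.
case: c x => x; cbn [psi_rep comp_s Psi psi_comp_s].
- rewrite cend_comp_s_can_iso_s /can_iso_s rho_castP rho_comp //.
    by rewrite size_s addnC.
  by rewrite /= size_t addnS addnC.
- rewrite cend_comp_s_can_iso_d /can_iso_d rho_castP rho_comp //.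
    by rewrite /= size_s addnS addnC.
  by rewrite size_t addnC.
Qed.

Lemma psi_rep_comp_d a b c a' b' (k : 'I_b.+1) (x : cO (Psi P) a b.+1 c)
    (y : cO (Psi P) a' b' false) s t o :
  size s = (a + a')%N -> size t = (b + b')%N ->
  psi_rep (comp_d k x y) s t o
  = cend_comp_d a b' k (psi_rep x) (psi_rep y) s t o.
Proof.
case: rho_rep => _ rho_comp _ _ size_s size_t.
(* [/=] would reduce [castP (erefl _) _ _] out of reach of [rho_castP]. *)
case: c x => x; cbn [psi_rep comp_d Psi psi_comp_d].
- rewrite cend_comp_d_can_iso_s /can_iso_s rho_castP rho_comp //.
  by rewrite /= size_t addSn.
- rewrite cend_comp_d_can_iso_d /can_iso_d rho_castP rho_comp //.
  by rewrite /= size_s addSn.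
Qed.

Lemma psi_rep_act_s a b c (x : cO (Psi P) a b c) (sg : 'S_a) s t o :
  size s = a -> size t = b ->
  psi_rep (act_s x sg) s t o = cend_act_s (psi_rep x) sg s t o.
Proof.
case: rho_rep => _ _ rho_in _ size_s size_t.
case: c x => x /=.
- by rewrite cend_act_s_can_iso_s /can_iso_s rho_in //= size_t.
- by rewrite cend_act_s_can_iso_d // /can_iso_d rho_in //= size_s.
Qed.

Lemma psi_rep_act_d a b c (x : cO (Psi P) a b c) (sg : 'S_b) s t o :
  size s = a -> size t = b ->
  psi_rep (act_d x sg) s t o = cend_act_d (psi_rep x) sg s t o.
Proof.
case: rho_rep => _ _ _ rho_out size_s size_t.
case: c x => x /=.
- by rewrite cend_act_d_can_iso_s // /can_iso_s rho_out //= size_t.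
- by rewrite cend_act_d_can_iso_d /can_iso_d rho_out //= size_s.
Qed.

Lemma psi_rep_is_col2_rep : is_col2_rep psi_rep.
Proof.
split; [exact: psi_rep_is_linear | exact: psi_rep_comp_s
       | exact: psi_rep_comp_d | exact: psi_rep_act_s | exact: psi_rep_act_d].
Qed.

End PsiRepresentation.

Theorem proposition2p2 (F : fieldType) (d : nat) (P : dioperad F)
  (rho : forall m n, dP P m n -> tensor F d) :
  @is_dioperad_rep F d P rho ->
  exists rb : forall a b c, cO (Psi P) a b c -> ctensor F d,
    [/\ @is_col2_rep F d (Psi P) rb,
        (forall m n (g : dP P m n.+1) s t o,
           size s = m -> size t = n ->
           rb m n true g s t o = can_iso_s (rho m n.+1 g) s t o) &
        (forall m n (g : dP P m.+1 n) s t o,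
           size s = m -> size t = n ->
           rb m n false g s t o = can_iso_d (rho m.+1 n g) s t o)].
Proof.
by move=> rho_rep; exists (psi_rep rho); split=> //; apply: psi_rep_is_col2_rep.
Qed.
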